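(* Let $\gamma_a,\gamma_s>0$, $\sigma_B>0$, $q>0$, $\lambda>0$ and $\varepsilon_a\in(0,1]$. For $T_s\ge0$ let $T_a^{(1)}(T_s)$ be the unique $T_a\ge0$ such that $\lambda T_a+2\varepsilon_a\sigma_B T_a^4=\lambda T_s+\varepsilon_a\sigma_B T_s^4$, and define \[ \Phi(T_s)=\frac{\lambda}{2}\big(T_s-T_a^{(1)}(T_s)\big)+\sigma_B\Big(1-\frac{\varepsilon_a}{2}\Big)T_s^4,\qquad T_s\ge0. \] Then $\Phi$ is strictly increasing and strictly convex on $[0,+\infty)$. Consequently, if $\beta_s$ is the piecewise linear coalbedo described in the context, the system \[ \gamma_a T_a'=-\lambda(T_a-T_s)+\varepsilon_a\sigma_B|T_s|^3T_s-2\varepsilon_a\sigma_B|T_a|^3T_a,\qquad \gamma_s T_s'=-\lambda(T_s-T_a)-\sigma_B|T_s|^3T_s+\varepsilon_a\sigma_B|T_a|^3T_a+q\beta_s(T_s) \] has at most three equilibrium points.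
   Context: The coalbedo is $\beta_s(T)=\beta_{s,-}$ for $T\le T_{s,-}$, $\beta_s(T)=\beta_{s,-}+(\beta_{s,+}-\beta_{s,-})\frac{T-T_{s,-}}{T_{s,+}-T_{s,-}}$ for $T\in[T_{s,-},T_{s,+}]$, and $\beta_s(T)=\beta_{s,+}$ for $T\ge T_{s,+}$, where $T_{s,+}>T_{s,-}>0$ and $\beta_{s,+}>\beta_{s,-}>0$. An equilibrium point is a point $(T_a,T_s)\in[0,\infty)^2$ at which both right-hand sides vanish. *)

From Stdlib Require Import Reals Lra List ClassicalEpsilon.
Open Scope R_scope.

Definition coalbedo (Tm Tp bm bp T : R) : R :=
  if Rle_dec T Tm then bm
  else if Rle_dec Tp T then bp
  else bm + (bp - bm) * ((T - Tm) / (Tp - Tm)).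

Definition Ta1 (lam epsa sigB Ts : R) : R :=
  epsilon (inhabits 0)
    (fun Ta => 0 <= Ta /\
       lam * Ta + 2 * epsa * sigB * Ta ^ 4 = lam * Ts + epsa * sigB * Ts ^ 4).

Definition Phi (lam epsa sigB Ts : R) : R :=
  lam / 2 * (Ts - Ta1 lam epsa sigB Ts) + sigB * (1 - epsa / 2) * Ts ^ 4.

(* Right-hand sides of the system (without the factors gamma_a, gamma_s). *)
Definition rhs_a (lam epsa sigB Ta Ts : R) : R :=
  - lam * (Ta - Ts) + epsa * sigB * (Rabs Ts ^ 3 * Ts)
  - 2 * epsa * sigB * (Rabs Ta ^ 3 * Ta).

Definition rhs_s (lam epsa sigB q Tm Tp bm bp Ta Ts : R) : R :=
  - lam * (Ts - Ta) - sigB * (Rabs Ts ^ 3 * Ts)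
  + epsa * sigB * (Rabs Ta ^ 3 * Ta) + q * coalbedo Tm Tp bm bp Ts.

Definition equilibrium (lam epsa sigB q Tm Tp bm bp : R) (p : R * R) : Prop :=
  0 <= fst p /\ 0 <= snd p /\
  rhs_a lam epsa sigB (fst p) (snd p) = 0 /\
  rhs_s lam epsa sigB q Tm Tp bm bp (fst p) (snd p) = 0.

From Stdlib Require Import Reals List.
From Stdlib Require Import Lra Lia Psatz ClassicalEpsilon.
Open Scope R_scope.

(* With [a = Ta1 Ts], the defining equation of [a] turns [Phi Ts] into
   [sigB (1 - epsa) Ts^4 + epsa sigB a^4], so it suffices that [Ta1] is
   increasing and [Ta1^4] strictly convex.  At an equilibrium [Ta = Ta1 Ts] and
   [Phi Ts = q beta_s(Ts)].  Since [beta_s] is constant on [0, Tm] and concave on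
   [Tm, oo), [Phi - q beta_s] is increasing on the first interval and strictly
   convex on the second, so it has at most one zero there and two here. *)

Lemma pow4_lt x y : 0 <= x -> x < y -> x ^ 4 < y ^ 4.
Proof.
  intros Hx Hxy.
  assert (Hsq : x ^ 2 < y ^ 2) by nra.
  replace (x ^ 4) with ((x ^ 2) ^ 2) by ring.
  replace (y ^ 4) with ((y ^ 2) ^ 2) by ring.
  nra.
Qed.

Lemma sqr_convex_gap u v t :
  t * u ^ 2 + (1 - t) * v ^ 2 - (t * u + (1 - t) * v) ^ 2 = t * (1 - t) * (u - v) ^ 2.
Proof. ring. Qed.

Lemma sqr_convex u v t : 0 <= t <= 1 ->
  (t * u + (1 - t) * v) ^ 2 <= t * u ^ 2 + (1 - t) * v ^ 2.
Proof.
  intros Ht; pose proof (sqr_convex_gap u v t).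
  assert (Htt : 0 <= t * (1 - t)) by nra.
  pose proof (Rmult_le_pos _ _ Htt (pow2_ge_0 (u - v))); lra.
Qed.

Lemma sqr_strict_convex u v t : u <> v -> 0 < t < 1 ->
  (t * u + (1 - t) * v) ^ 2 < t * u ^ 2 + (1 - t) * v ^ 2.
Proof.
  intros Huv Ht; pose proof (sqr_convex_gap u v t).
  assert (Htt : 0 < t * (1 - t)) by nra.
  assert (Huv2 : 0 < (u - v) ^ 2) by (rewrite <- Rsqr_pow2; apply Rsqr_pos_lt; lra).
  pose proof (Rmult_lt_0_compat _ _ Htt Huv2); lra.
Qed.

Lemma pow4_convex u v t : 0 <= t <= 1 ->
  (t * u + (1 - t) * v) ^ 4 <= t * u ^ 4 + (1 - t) * v ^ 4.
Proof.
  intros Ht.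
  pose proof (pow2_ge_0 (t * u + (1 - t) * v)).
  pose proof (sqr_convex u v t Ht).
  pose proof (sqr_convex (u ^ 2) (v ^ 2) t Ht).
  rewrite <- !pow_mult in *; simpl in *; nra.
Qed.

Lemma pow4_strict_convex u v t : u <> v -> 0 < t < 1 ->
  (t * u + (1 - t) * v) ^ 4 < t * u ^ 4 + (1 - t) * v ^ 4.
Proof.
  intros Huv Ht.
  pose proof (pow2_ge_0 (t * u + (1 - t) * v)).
  pose proof (sqr_strict_convex u v t Huv Ht).
  pose proof (sqr_convex (u ^ 2) (v ^ 2) t ltac:(lra)).
  rewrite <- !pow_mult in *; simpl in *; nra.
Qed.

Definition lin_quartic (a k x : R) : R := a * x + k * x ^ 4.

Lemma lin_quartic_lt a k x y : 0 < a -> 0 <= k -> 0 <= x -> x < y ->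
  lin_quartic a k x < lin_quartic a k y.
Proof.
  intros Ha Hk Hx Hxy; unfold lin_quartic.
  pose proof (pow4_lt x y Hx Hxy); nra.
Qed.

Lemma lin_quartic_le a k x y : 0 <= a -> 0 <= k -> 0 <= x -> x <= y ->
  lin_quartic a k x <= lin_quartic a k y.
Proof.
  intros Ha Hk Hx Hxy; unfold lin_quartic.
  pose proof (pow_incr x y 4 (conj Hx Hxy)); nra.
Qed.

Lemma lin_quartic_inj a k x y : 0 < a -> 0 <= k -> 0 <= x -> 0 <= y ->
  lin_quartic a k x = lin_quartic a k y -> x = y.
Proof.
  intros Ha Hk Hx Hy Hxy.
  destruct (Rtotal_order x y) as [H | [H | H]]; auto.
  - pose proof (lin_quartic_lt a k x y Ha Hk Hx H); lra.
  - pose proof (lin_quartic_lt a k y x Ha Hk Hy H); lra.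
Qed.

Lemma lin_quartic_ge0 a k x : 0 < a -> 0 <= k -> 0 <= x -> 0 <= lin_quartic a k x.
Proof.
  intros Ha Hk Hx; unfold lin_quartic.
  pose proof (pow_le x 4 Hx); nra.
Qed.

Lemma lin_quartic_surj a k c : 0 < a -> 0 <= k -> 0 <= c ->
  exists x, 0 <= x /\ lin_quartic a k x = c.
Proof.
  intros Ha Hk Hc; unfold lin_quartic.
  assert (Hca : 0 <= c / a)
    by (unfold Rdiv; apply Rmult_le_pos; [lra | apply Rlt_le, Rinv_0_lt_compat; lra]).
  assert (Hsign : (a * 0 + k * 0 ^ 4 - c) * (a * (c / a) + k * (c / a) ^ 4 - c) <= 0).
  { replace (_ * _) with (- (c * (k * (c / a) ^ 4))) by (field; lra).
    pose proof (Rmult_le_pos _ _ Hc (Rmult_le_pos _ _ Hk (pow_le _ 4 Hca))); lra. }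
  destruct (IVT_cor (fun x => a * x + k * x ^ 4 - c) 0 (c / a)) as [x [Hx Hfx]];
    [reg | exact Hca | exact Hsign |].
  exists x; split; lra.
Qed.

Section Ta1.

Variables lam epsa sigB : R.
Hypotheses (hlam : 0 < lam) (heps : 0 < epsa) (hsig : 0 < sigB).

Let Ta1_eq Ta Ts := lin_quartic lam (2 * epsa * sigB) Ta = lin_quartic lam (epsa * sigB) Ts.

Lemma Ta1_spec Ts : 0 <= Ts -> 0 <= Ta1 lam epsa sigB Ts /\ Ta1_eq (Ta1 lam epsa sigB Ts) Ts.
Proof.
  intros HTs; unfold Ta1; apply epsilon_spec.
  apply lin_quartic_surj; [lra | nra | apply lin_quartic_ge0; nra].
Qed.

Lemma Ta1_unique Ta Ts : 0 <= Ta -> 0 <= Ts -> Ta1_eq Ta Ts -> Ta = Ta1 lam epsa sigB Ts.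
Proof.
  intros HTa HTs HE; destruct (Ta1_spec Ts HTs) as [HTa1 HE'].
  apply (lin_quartic_inj lam (2 * epsa * sigB)); [lra | nra | exact HTa | exact HTa1 |].
  unfold Ta1_eq in *; congruence.
Qed.

Lemma Ta1_lt x y : 0 <= x -> x < y -> Ta1 lam epsa sigB x < Ta1 lam epsa sigB y.
Proof.
  intros Hx Hxy.
  destruct (Ta1_spec x Hx) as [Hax Ex], (Ta1_spec y ltac:(lra)) as [Hay Ey].
  pose proof (lin_quartic_lt lam (epsa * sigB) x y hlam ltac:(nra) Hx Hxy).
  apply Rnot_le_lt; intros Hyx.
  pose proof (lin_quartic_le lam (2 * epsa * sigB) _ _ ltac:(lra) ltac:(nra) Hay Hyx).
  unfold Ta1_eq in *; lra.
Qed.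

Lemma PhiE Ts : 0 <= Ts ->
  Phi lam epsa sigB Ts = sigB * (1 - epsa) * Ts ^ 4 + epsa * sigB * Ta1 lam epsa sigB Ts ^ 4.
Proof.
  intros HTs; destruct (Ta1_spec Ts HTs) as [_ E].
  unfold Phi, Ta1_eq, lin_quartic in *; lra.
Qed.

(* If [Ta1 z ^ 4 >= B], the convex combination of [Ta1 x ^ 4] and [Ta1 y ^ 4],
   then by convexity of the fourth power [Ta1 z] dominates the convex combination
   of [Ta1 x] and [Ta1 y], so the left side of the defining equation at [z]
   reaches the convex combination of the right sides at [x] and [y], against the
   strict convexity of the right side. *)
Lemma Ta1_pow4_strict_convex x y t : 0 <= x -> 0 <= y -> x <> y -> 0 < t < 1 ->
  Ta1 lam epsa sigB (t * x + (1 - t) * y) ^ 4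
  < t * Ta1 lam epsa sigB x ^ 4 + (1 - t) * Ta1 lam epsa sigB y ^ 4.
Proof.
  intros Hx Hy Hxy Ht.
  assert (Hz : 0 <= t * x + (1 - t) * y) by nra.
  destruct (Ta1_spec x Hx) as [Hax Ex], (Ta1_spec y Hy) as [Hay Ey], (Ta1_spec _ Hz) as [Haz Ez].
  set (ax := Ta1 lam epsa sigB x) in *; set (ay := Ta1 lam epsa sigB y) in *.
  set (az := Ta1 lam epsa sigB (t * x + (1 - t) * y)) in *.
  set (B := t * ax ^ 4 + (1 - t) * ay ^ 4).
  apply Rnot_le_lt; intros HB.
  assert (Hc : t * ax + (1 - t) * ay <= az).
  { apply Rnot_lt_le; intros Hlt.
    pose proof (pow4_lt _ _ Haz Hlt); pose proof (pow4_convex ax ay t ltac:(lra)).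
    unfold B in *; lra. }
  assert (Hes : 0 < epsa * sigB) by nra.
  pose proof (pow4_strict_convex x y t Hxy Ht).
  unfold Ta1_eq, lin_quartic in *.
  assert (lam * (t * ax + (1 - t) * ay) + 2 * epsa * sigB * B
          <= lam * az + 2 * epsa * sigB * az ^ 4) by nra.
  assert (lam * (t * x + (1 - t) * y) + epsa * sigB * (t * x + (1 - t) * y) ^ 4
          < t * (lam * x + epsa * sigB * x ^ 4) + (1 - t) * (lam * y + epsa * sigB * y ^ 4))
    by nra.
  unfold B in *; nra.
Qed.

Hypothesis heps1 : epsa <= 1.

Lemma Phi_lt x y : 0 <= x -> x < y -> Phi lam epsa sigB x < Phi lam epsa sigB y.
Proof.
  intros Hx Hxy; rewrite !PhiE by lra.
  destruct (Ta1_spec x Hx) as [Hax _].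
  pose proof (pow4_lt _ _ Hax (Ta1_lt x y Hx Hxy)).
  pose proof (pow4_lt x y Hx Hxy).
  assert (0 <= sigB * (1 - epsa)) by nra.
  assert (0 < epsa * sigB) by nra.
  nra.
Qed.

Lemma Phi_strict_convex x y t : 0 <= x -> 0 <= y -> x <> y -> 0 < t < 1 ->
  Phi lam epsa sigB (t * x + (1 - t) * y)
  < t * Phi lam epsa sigB x + (1 - t) * Phi lam epsa sigB y.
Proof.
  intros Hx Hy Hxy Ht; rewrite !PhiE by nra.
  pose proof (Ta1_pow4_strict_convex x y t Hx Hy Hxy Ht).
  pose proof (pow4_convex x y t ltac:(lra)).
  assert (0 <= sigB * (1 - epsa)) by nra.
  assert (0 < epsa * sigB) by nra.
  nra.
Qed.

End Ta1.

Lemma Rmin_affine_concave a b c x y t : 0 <= t <= 1 ->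
  t * Rmin (a + b * x) c + (1 - t) * Rmin (a + b * y) c
  <= Rmin (a + b * (t * x + (1 - t) * y)) c.
Proof.
  intros Ht.
  pose proof (Rmin_l (a + b * x) c); pose proof (Rmin_r (a + b * x) c).
  pose proof (Rmin_l (a + b * y) c); pose proof (Rmin_r (a + b * y) c).
  apply Rmin_glb; nra.
Qed.

Section Coalbedo.

Variables Tm Tp bm bp : R.
Hypotheses (hT : Tm < Tp) (hb : bm <= bp).

Lemma coalbedo_le_Tm T : T <= Tm -> coalbedo Tm Tp bm bp T = bm.
Proof. intros HT; unfold coalbedo; destruct (Rle_dec T Tm); lra. Qed.

Lemma coalbedo_ge_Tm T : Tm <= T ->
  coalbedo Tm Tp bm bp T
  = Rmin ((bm - (bp - bm) / (Tp - Tm) * Tm) + (bp - bm) / (Tp - Tm) * T) bp.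
Proof.
  intros HT.
  set (k := (bp - bm) / (Tp - Tm)).
  assert (Hk : 0 <= k)
    by (unfold k, Rdiv; apply Rmult_le_pos; [lra | apply Rlt_le, Rinv_0_lt_compat; lra]).
  assert (Hkt : bm - k * Tm + k * T = bm + (bp - bm) * ((T - Tm) / (Tp - Tm)))
    by (unfold k; field; lra).
  assert (HkTp : bm - k * Tm + k * Tp = bp) by (unfold k; field; lra).
  unfold coalbedo; destruct (Rle_dec T Tm); [|destruct (Rle_dec Tp T)].
  - rewrite Rmin_left; nra.
  - rewrite Rmin_right; nra.
  - rewrite Rmin_left; nra.
Qed.

Lemma coalbedo_concave x y t : Tm <= x -> Tm <= y -> 0 <= t <= 1 ->
  t * coalbedo Tm Tp bm bp x + (1 - t) * coalbedo Tm Tp bm bp y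
  <= coalbedo Tm Tp bm bp (t * x + (1 - t) * y).
Proof.
  intros Hx Hy Ht.
  rewrite !coalbedo_ge_Tm by nra.
  apply Rmin_affine_concave; exact Ht.
Qed.

End Coalbedo.

Lemma strict_convex_zeros (a : R) (f : R -> R) :
  (forall x y t, a <= x -> a <= y -> x <> y -> 0 < t < 1 ->
     f (t * x + (1 - t) * y) < t * f x + (1 - t) * f y) ->
  forall x y z, a <= x -> a <= y -> a <= z -> f x = 0 -> f y = 0 -> f z = 0 ->
  x = y \/ y = z \/ x = z.
Proof.
  intros Hf.
  assert (Hord : forall u v w, a <= u -> u < v < w -> f u = 0 -> f v = 0 -> f w = 0 -> False).
  { intros u v w Hu Huvw Fu Fv Fw.
    set (t := (w - v) / (w - u)).
    assert (Ht : 0 < t < 1).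
    { unfold t; split; [apply Rdiv_lt_0_compat; lra |].
      apply (Rmult_lt_reg_r (w - u)); [lra |].
      unfold Rdiv; rewrite Rmult_assoc, Rinv_l; lra. }
    assert (Hv : t * u + (1 - t) * w = v) by (unfold t; field; lra).
    pose proof (Hf u w t Hu ltac:(lra) ltac:(lra) Ht) as Hlt.
    rewrite Hv, Fu, Fv, Fw in Hlt; lra. }
  intros x y z Hx Hy Hz Fx Fy Fz.
  destruct (Rtotal_order x y) as [Hxy | [Hxy | Hxy]]; [| now left |];
  destruct (Rtotal_order y z) as [Hyz | [Hyz | Hyz]]; try (now right; left);
  destruct (Rtotal_order x z) as [Hxz | [Hxz | Hxz]]; try (now right; right);
  exfalso;
  first [ apply (Hord x y z); lra | apply (Hord x z y); lra | apply (Hord y x z); lra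
        | apply (Hord y z x); lra | apply (Hord z x y); lra | apply (Hord z y x); lra ].
Qed.

Lemma NoDup_length_le1 {A : Type} (l : list A) : NoDup l ->
  (forall x y, In x l -> In y l -> x = y) -> (length l <= 1)%nat.
Proof.
  intros Hnd Hl; destruct l as [| x [| y l]]; simpl; try lia.
  exfalso; apply NoDup_cons_iff in Hnd as [Hx _].
  apply Hx; left; apply Hl; simpl; auto.
Qed.

Lemma NoDup_length_le2 {A : Type} (l : list A) : NoDup l ->
  (forall x y z, In x l -> In y l -> In z l -> x = y \/ y = z \/ x = z) -> (length l <= 2)%nat.
Proof.
  intros Hnd Hl; destruct l as [| x [| y [| z l]]]; simpl; try lia.
  exfalso; apply NoDup_cons_iff in Hnd as [Hx Hnd]; apply NoDup_cons_iff in Hnd as [Hy _].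
  destruct (Hl x y z) as [-> | [-> | ->]]; simpl; auto.
  - apply Hx; simpl; auto.
  - apply Hy; simpl; auto.
  - apply Hx; simpl; auto.
Qed.

Section Equilibria.

Variables lam epsa sigB q Tm Tp bm bp : R.
Hypotheses (hlam : 0 < lam) (heps0 : 0 < epsa) (heps1 : epsa <= 1) (hsig : 0 < sigB)
  (hq : 0 <= q) (hTm : 0 <= Tm) (hT : Tm < Tp) (hb : bm <= bp).

Definition balance (Ts : R) : R :=
  Phi lam epsa sigB Ts - q * coalbedo Tm Tp bm bp Ts.

Lemma balance_lt x y : 0 <= x -> x < y -> y <= Tm -> balance x < balance y.
Proof.
  intros Hx Hxy HyTm; unfold balance.
  rewrite !coalbedo_le_Tm by lra.
  pose proof (Phi_lt lam epsa sigB hlam heps0 hsig heps1 x y Hx Hxy); lra.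
Qed.

Lemma balance_strict_convex x y t : Tm <= x -> Tm <= y -> x <> y -> 0 < t < 1 ->
  balance (t * x + (1 - t) * y) < t * balance x + (1 - t) * balance y.
Proof.
  intros Hx Hy Hxy Ht; unfold balance.
  pose proof (Phi_strict_convex lam epsa sigB hlam heps0 hsig heps1 x y t
                ltac:(lra) ltac:(lra) Hxy Ht).
  pose proof (coalbedo_concave Tm Tp bm bp hT hb x y t Hx Hy ltac:(lra)).
  nra.
Qed.

Let is_equilibrium := equilibrium lam epsa sigB q Tm Tp bm bp.

Lemma equilibrium_balance p : is_equilibrium p ->
  0 <= snd p /\ fst p = Ta1 lam epsa sigB (snd p) /\ balance (snd p) = 0.
Proof.
  destruct p as [Ta Ts]; intros [HTa [HTs [Ha Hs]]]; simpl in *.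
  unfold rhs_a, rhs_s in *; rewrite !Rabs_pos_eq in Ha, Hs by lra.
  assert (ETa : Ta = Ta1 lam epsa sigB Ts).
  { apply Ta1_unique; auto; unfold lin_quartic; lra. }
  split; [lra | split; [exact ETa |]].
  unfold balance; rewrite PhiE, <- ETa by auto; lra.
Qed.

Lemma equilibrium_eq p p' : is_equilibrium p -> is_equilibrium p' -> snd p = snd p' -> p = p'.
Proof.
  intros Hp Hp' E.
  destruct (equilibrium_balance p Hp) as [_ [Ep _]], (equilibrium_balance p' Hp') as [_ [Ep' _]].
  destruct p, p'; simpl in *; subst; reflexivity.
Qed.

Lemma equilibria_length_le3 l : NoDup l -> Forall is_equilibrium l -> (length l <= 3)%nat.
Proof.
  intros Hnd Hl; rewrite Forall_forall in Hl.
  set (below := fun p : R * R => if Rlt_dec (snd p) Tm then true else false).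
  rewrite <- (filter_length below l).
  assert (Hbelow : (length (filter below l) <= 1)%nat).
  { apply NoDup_length_le1; [now apply NoDup_filter |].
    intros p p' Hp Hp'; apply filter_In in Hp as [Hp Bp], Hp' as [Hp' Bp'].
    apply equilibrium_eq; auto.
    destruct (equilibrium_balance p (Hl p Hp)) as [Gp [_ Zp]],
             (equilibrium_balance p' (Hl p' Hp')) as [Gp' [_ Zp']].
    unfold below in Bp, Bp'.
    destruct (Rlt_dec (snd p) Tm), (Rlt_dec (snd p') Tm); try discriminate.
    destruct (Rtotal_order (snd p) (snd p')) as [H | [H | H]]; auto.
    - pose proof (balance_lt (snd p) (snd p') Gp H ltac:(lra)); lra.
    - pose proof (balance_lt (snd p') (snd p) Gp' H ltac:(lra)); lra. }
  assert (Habove : (length (filter (fun p => negb (below p)) l) <= 2)%nat).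
  { apply NoDup_length_le2; [now apply NoDup_filter |].
    intros p1 p2 p3 H1 H2 H3.
    apply filter_In in H1 as [H1 B1], H2 as [H2 B2], H3 as [H3 B3].
    destruct (equilibrium_balance p1 (Hl p1 H1)) as [_ [_ Z1]],
             (equilibrium_balance p2 (Hl p2 H2)) as [_ [_ Z2]],
             (equilibrium_balance p3 (Hl p3 H3)) as [_ [_ Z3]].
    unfold below in B1, B2, B3.
    destruct (Rlt_dec (snd p1) Tm), (Rlt_dec (snd p2) Tm), (Rlt_dec (snd p3) Tm);
      try discriminate.
    destruct (strict_convex_zeros Tm balance balance_strict_convex (snd p1) (snd p2) (snd p3))
      as [E | [E | E]]; try lra; [left | right; left | right; right];
      apply equilibrium_eq; auto. }
  lia.
Qed.

End Equilibria.

Theorem lemma6p3 (gama gams sigB q lam epsa Tm Tp bm bp : R)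
  (hga : 0 < gama) (hgs : 0 < gams) (hsig : 0 < sigB) (hq : 0 < q)
  (hlam : 0 < lam) (heps0 : 0 < epsa) (heps1 : epsa <= 1)
  (hTm : 0 < Tm) (hT : Tm < Tp) (hbm : 0 < bm) (hb : bm < bp) :
  (forall x y, 0 <= x -> x < y -> Phi lam epsa sigB x < Phi lam epsa sigB y) /\
  (forall x y t, 0 <= x -> 0 <= y -> x <> y -> 0 < t < 1 ->
     Phi lam epsa sigB (t * x + (1 - t) * y)
       < t * Phi lam epsa sigB x + (1 - t) * Phi lam epsa sigB y) /\
  (forall l : list (R * R), NoDup l ->
     Forall (equilibrium lam epsa sigB q Tm Tp bm bp) l ->
     (length l <= 3)%nat).
Proof.
  split; [| split].
  - exact (Phi_lt lam epsa sigB hlam heps0 hsig heps1).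
  - exact (Phi_strict_convex lam epsa sigB hlam heps0 hsig heps1).
  - exact (equilibria_length_le3 lam epsa sigB q Tm Tp bm bp
             hlam heps0 heps1 hsig (Rlt_le _ _ hq) (Rlt_le _ _ hTm) hT (Rlt_le _ _ hb)).
Qed.
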